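(* Let $R$ be a commutative ring with unit, let $E$ be an $R$-module and $E^*=\mathrm{Hom}_R(E,R)$. Then the quasi-coherent $R$-module associated with $E^*$, i.e. the functor $B\mapsto E^*\otimes_R B$, coincides (via the canonical morphism) with the dual functor $\mathbf{E}^*$ if and only if $E$ is a projective $R$-module of finite type.
   Context: All functors are covariant functors on the category of commutative $R$-algebras. For an $R$-module $M$, $\mathbf{M}$ denotes the functor of $R$-modules $B\mapsto M\otimes_R B$ (a quasi-coherent $R$-module); $\mathbf{R}$ is $B\mapsto B$. For functors of $R$-modules $F,H$, $\mathbf{Hom}_R(F,H)$ is the functor $B\mapsto \mathrm{Hom}_B(F_{|B},H_{|B})$, where $F_{|B}$ is the restriction of $F$ to commutative $B$-algebras, and $F^*:=\mathbf{Hom}_R(F,\mathbf{R})$. Thus $\mathbf{E}^*(B)=\mathrm{Hom}_B(\mathbf{E}_{|B},\mathbf{R}_{|B})$, which is identified with $\mathrm{Hom}_R(E,B)$; the canonical morphism from $B\mapsto E^*\otimes_R B$ to $\mathbf{E}^*$ sends $w\otimes b$ to $e\mapsto w(e)b$. *)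

From HB Require Import structures.
From mathcomp Require Import all_boot all_order all_algebra.
Set Implicit Arguments. Unset Strict Implicit. Unset Printing Implicit Defensive.
Import GRing.Theory.
Local Open Scope ring_scope.

Section Defs.
Variable R : comPzRingType.

Definition linR (U V : lmodType R) (f : U -> V) : Prop :=
  forall (a : R) (x y : U), f (a *: x + y) = a *: f x + f y.

Definition finite_type (E : lmodType R) : Prop :=
  exists s : seq E, forall x : E,
    exists c : 'I_(size s) -> R, x = \sum_(i < size s) c i *: s`_i.

Definition projective (E : lmodType R) : Prop :=
  forall (M N : lmodType R) (p : M -> N) (f : E -> N),
    linR p -> (forall y : N, exists x : M, p x = y) -> linR f ->
    exists h : E -> M, linR h /\ forall e : E, p (h e) = f e.

(* The canonical R-bilinear map  E^* x B -> Hom_R(E,B) = E^*(B),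
   (w, b) |-> (e |-> w(e) b). *)
Definition canmap (E : lmodType R) (B : comAlgType R) (w : E -> R^o) (b : B)
  : E -> B := fun e => w e *: b.

(* The canonical morphism  E^* (x)_R B -> Hom_R(E,B)  is an isomorphism,
   i.e. (canmap) exhibits Hom_R(E,B) (the R-linear maps E -> B, with pointwise
   operations) as the tensor product E^* (x)_R B, where E^* is the set of
   R-linear maps E -> R.  Stated via the universal property of the tensor
   product: every R-bilinear map on E^* x B factors uniquely through canmap
   by an R-linear map on Hom_R(E,B). *)
Definition canonical_iso (E : lmodType R) (B : comAlgType R) : Prop :=
  forall (M : lmodType R) (f : (E -> R^o) -> B -> M),
    (forall (a : R) (w w' : E -> R^o) (b : B), linR w -> linR w' ->
        f (fun e => a *: w e + w' e) b = a *: f w b + f w' b) ->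
    (forall (a : R) (w : E -> R^o) (b b' : B), linR w ->
        f w (a *: b + b') = a *: f w b + f w b') ->
    (exists g : (E -> B) -> M,
        (forall (a : R) (h h' : E -> B), linR h -> linR h' ->
            g (fun e => a *: h e + h' e) = a *: g h + g h') /\
        (forall (w : E -> R^o) (b : B), linR w -> g (canmap w b) = f w b)) /\
    (forall g1 g2 : (E -> B) -> M,
        (forall (a : R) (h h' : E -> B), linR h -> linR h' ->
            g1 (fun e => a *: h e + h' e) = a *: g1 h + g1 h') ->
        (forall (a : R) (h h' : E -> B), linR h -> linR h' ->
            g2 (fun e => a *: h e + h' e) = a *: g2 h + g2 h') ->
        (forall (w : E -> R^o) (b : B), linR w -> g1 (canmap w b) = f w b) ->
        (forall (w : E -> R^o) (b : B), linR w -> g2 (canmap w b) = f w b) ->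
        forall h : E -> B, linR h -> g1 h = g2 h).

End Defs.

From HB Require Import structures.
From mathcomp Require Import all_boot all_order all_algebra.
From mathcomp Require Import boolp functions.
Import GRing.Theory.
Local Open Scope ring_scope.

(* Both sides amount to the existence of a finite dual basis (w_i, x_i) of E,
   i.e. e = sum_i w_i(e) x_i with w_i in E^*.  Given one, every R-linear
   h : E -> B is sum_i canmap w_i (h x_i), and every w in E^* is
   sum_i w(x_i) w_i, which yields the universal property.  Conversely, let S be
   the submodule of Hom_R(E,B) spanned by the canmap w b: factoring the canmap's
   through S gives g : Hom_R(E,B) -> S, and uniqueness for Hom_R(E,B) itself
   forces val \o g = id, so S is all of Hom_R(E,B).  For the square-zero
   extension B = R + E, expressing e |-> (0, e) as an element of S yields a dual
   basis. *)

Section Linearity.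
Context {R : comPzRingType} {U W : lmodType R}.

Lemma linR_zero : linR (0 : U -> W).
Proof. by move=> a x y /=; rewrite scaler0 addr0. Qed.

Definition linR_linear {f : U -> W} (fL : linR f) : {linear U -> W} :=
  HB.pack_for {linear U -> W} f (GRing.isLinear.Build R U W *:%R f fL).

Lemma linRZ {f : U -> W} : linR f -> forall a x, f (a *: x) = a *: f x.
Proof. by move=> fL a x; have := linearZ_LR (linR_linear fL) a x. Qed.

Lemma linR_sum {f : U -> W} : linR f -> forall I (r : seq I) (F : I -> U),
  f (\sum_(i <- r) F i) = \sum_(i <- r) f (F i).
Proof. by move=> fL I r F; exact: (raddf_sum (linR_linear fL)). Qed.

Lemma linR_sum_fun (I : eqType) (r : seq I) (F : I -> U -> W) :
  {in r, forall i, linR (F i)} -> linR (\sum_(i <- r) F i).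
Proof.
move=> FL a x y; rewrite !fct_sumE scaler_sumr -big_split /=.
by apply: eq_big_seq => i ri; rewrite FL.
Qed.

Lemma linR_scale_fun a (h : U -> W) : linR h -> linR (a *: h).
Proof. by move=> hL b x y; rewrite !scalrfctE hL scalerDr !scalerA mulrC. Qed.

Lemma linR_comb a (f g : U -> W) : linR f -> linR g -> linR (a *: f + g).
Proof.
move=> fL gL b x y; rewrite !(addrfctE, scalrfctE) fL gL !scalerDr !scalerA.
by rewrite (mulrC a) addrACA.
Qed.

End Linearity.

Section DualBasis.
Context {R : comPzRingType} {E : lmodType R}.

Definition dual_basis (t : seq ((E -> R^o) * E)) : Prop :=
  {in t, forall p, linR p.1} /\ forall e, e = \sum_(p <- t) p.1 e *: p.2.

Lemma dual_basis_finite_type t : dual_basis t -> finite_type E.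
Proof.
move=> [_ tE]; exists [seq p.2 | p <- t] => e; rewrite size_map.
pose p0 : (E -> R^o) * E := (fun=> 0, 0).
exists (fun i => (nth p0 t i).1 e); rewrite {1}[e]tE (big_nth p0) big_mkord.
by apply: eq_bigr => i _; rewrite (nth_map p0).
Qed.

Lemma dual_basis_projective t : dual_basis t -> projective E.
Proof.
move=> [tL tE] M N q f qL q_surj fL.
pose lift x := projT1 (cid (q_surj (f x))).
exists (fun e => \sum_(p <- t) p.1 e *: lift p.2); split.
  move=> a x y; rewrite scaler_sumr -big_split /=; apply: eq_big_seq => p pt.
  by rewrite tL // scalerDl scalerA.
move=> e; rewrite (linR_sum qL) [in RHS](tE e) (linR_sum fL).
by apply: eq_bigr => p _; rewrite !(linRZ qL, linRZ fL) (projT2 (cid (q_surj _))).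
Qed.

Lemma finite_projective_dual_basis :
  finite_type E -> projective E -> exists t, dual_basis t.
Proof.
move=> [s sE] Eproj; pose n := size s.
pose comb (c : 'rV[R]_n) : E := \sum_(i < n) c 0 i *: s`_i.
have combL : linR comb.
  move=> a c c'; rewrite /comb scaler_sumr -big_split /=; apply: eq_bigr => i _.
  by rewrite !mxE scalerDl scalerA.
have comb_surj y : exists c, comb c = y.
  by have [c ->] := sE y; exists (\row_i c i); apply: eq_bigr => i _; rewrite mxE.
have [sec [secL combK]] := Eproj _ _ comb id combL comb_surj (fun _ _ _ => erefl).
exists [seq ((fun e => sec e 0 i : R^o), s`_i) | i <- enum 'I_n]; split.
  by move=> _ /mapP[i _ ->] a x y /=; rewrite secL !mxE.
by move=> e; rewrite big_map big_enum /= -[LHS]combK.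
Qed.

End DualBasis.

Section HomLinear.
Context {R : comPzRingType} {E U M : lmodType R}.

Definition linear_on_hom (g : (E -> U) -> M) : Prop :=
  forall a h h', linR h -> linR h' -> g (a *: h + h') = a *: g h + g h'.

Context {g : (E -> U) -> M} (gL : linear_on_hom g).

Lemma linear_on_hom0 : g 0 = 0.
Proof.
have := gL 1 0 0 linR_zero linR_zero; rewrite !scale1r addr0 -{1}[g 0]addr0.
by move/addrI.
Qed.

Lemma linear_on_homZ {h} : linR h -> forall a, g (a *: h) = a *: g h.
Proof.
by move=> hL a; rewrite -[a *: h]addr0 gL ?linear_on_hom0 ?addr0 //; exact: linR_zero.
Qed.

Lemma linear_on_hom_sum {I : eqType} {r : seq I} {F : I -> E -> U} :
  {in r, forall i, linR (F i)} -> g (\sum_(i <- r) F i) = \sum_(i <- r) g (F i).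
Proof.
elim: r => [|i r IHr] FL; first by rewrite !big_nil linear_on_hom0.
have FrL : {in r, forall j, linR (F j)} by move=> j rj; apply: FL; rewrite inE rj orbT.
rewrite !big_cons -[F i]scale1r gL ?scale1r ?IHr //; last exact: linR_sum_fun.
by apply: FL; rewrite mem_head.
Qed.

End HomLinear.

Section Canmap.
Context {R : comPzRingType} {E : lmodType R} {B : comAlgType R}.

Lemma canmap_linR (w : E -> R^o) (b : B) : linR w -> linR (canmap w b).
Proof. by move=> wL a x y; rewrite /canmap wL scalerDl scalerA. Qed.

Lemma canmapZr (w : E -> R^o) a (b : B) : canmap w (a *: b) = a *: canmap w b.
Proof. by apply/funext => e; rewrite /canmap scalrfctE /= scalerA mulrC -scalerA. Qed.

Lemma canmapPr (w : E -> R^o) a (b b' : B) :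
  canmap w (a *: b + b') = a *: canmap w b + canmap w b'.
Proof. by rewrite -canmapZr; apply/funext => e; rewrite /canmap scalerDr. Qed.

Lemma canmapPl (w w' : E -> R^o) a (b : B) :
  canmap (a *: w + w') b = a *: canmap w b + canmap w' b.
Proof.
by apply/funext => e; rewrite /canmap !(addrfctE, scalrfctE) /= scalerDl scalerA.
Qed.

End Canmap.

Section DualBasisUniversal.
Context {R : comPzRingType} {E : lmodType R} {t : seq ((E -> R^o) * E)}.
Hypothesis tB : dual_basis t.

Lemma dual_basis_expansion {W : lmodType R} {h : E -> W} :
  linR h -> h = \sum_(p <- t) (fun e => p.1 e *: h p.2).
Proof.
move=> hL; apply/funext => e; rewrite fct_sumE {1}(tB.2 e) (linR_sum hL).
by apply: eq_bigr => p _; rewrite (linRZ hL).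
Qed.

Lemma dual_basis_canonical_iso (B : comAlgType R) : canonical_iso E B.
Proof.
have [tL _] := tB.
move=> M f fLl fLr; have fvL v : linR v -> linR (f v) by move=> vL a *; exact: fLr.
split.
  exists (fun h => \sum_(p <- t) f p.1 (h p.2)); split.
    move=> a h h' _ _; rewrite scaler_sumr -big_split; apply: eq_big_seq => p pt.
    exact/fLr/tL.
  move=> w b wL; have fbL : linear_on_hom (f^~ b) by move=> a v v'; exact: fLl.
  have wE : w = \sum_(p <- t) w p.2 *: p.1.
    rewrite [LHS](dual_basis_expansion wL); apply: eq_bigr => p _.
    by apply/funext => e; exact: mulrC.
  rewrite [in RHS]wE (linear_on_hom_sum fbL) => [|p pt]; last exact/linR_scale_fun/tL.
  apply: eq_big_seq => p pt; rewrite /canmap (linear_on_homZ fbL (tL _ pt)).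
  by rewrite (linRZ (fvL _ (tL _ pt))).
move=> g1 g2 g1L g2L g1f g2f h hL.
have tcL : {in t, forall p, linR (canmap p.1 (h p.2))}.
  by move=> p pt; exact/canmap_linR/tL.
rewrite (dual_basis_expansion hL).
rewrite (linear_on_hom_sum g1L tcL) (linear_on_hom_sum g2L tcL).
by apply: eq_big_seq => p pt; rewrite g1f ?g2f //; exact: tL.
Qed.

End DualBasisUniversal.

Section CanmapSpan.
Context {R : comPzRingType} {E : lmodType R} {B : comAlgType R}.

Definition in_canmap_span (h : E -> B) : Prop :=
  exists2 t : seq ((E -> R^o) * B),
    {in t, forall p, linR p.1} & h = \sum_(p <- t) canmap p.1 p.2.

Definition canmap_span : {pred E -> B} := fun h => `[< in_canmap_span h >].

Lemma canmap_span_submod_closed : submod_closed canmap_span.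
Proof.
split; first by apply/asboolP; exists [::]; rewrite ?big_nil.
move=> a u v /asboolP[tu tuL ->] /asboolP[tv tvL ->]; apply/asboolP.
exists ([seq (p.1, a *: p.2) | p <- tu] ++ tv).
  by move=> p; rewrite mem_cat => /orP[/mapP[q qt ->]|/tvL //]; exact: (tuL q qt).
rewrite big_cat big_map scaler_sumr; congr (_ + _).
by apply: eq_bigr => p _; rewrite canmapZr.
Qed.

HB.instance Definition _ :=
  GRing.isSubmodClosed.Build R (E -> B) canmap_span canmap_span_submod_closed.

Record canmap_spanType := CanmapSpan {
  canmap_span_val : E -> B;
  _ : canmap_span_val \in canmap_span }.

HB.instance Definition _ := [isSub for canmap_span_val].
HB.instance Definition _ := [Choice of canmap_spanType by <:].
HB.instance Definition _ := [SubChoice_isSubLmodule of canmap_spanType by <:].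

Lemma canmap_in_span (w : E -> R^o) (b : B) : linR w -> canmap w b \in canmap_span.
Proof.
move=> wL; apply/asboolP; exists [:: (w, b)]; last by rewrite big_seq1.
by move=> p /[!inE] /eqP->.
Qed.

Lemma canonical_iso_in_canmap_span {h : E -> B} :
  canonical_iso E B -> linR h -> in_canmap_span h.
Proof.
move=> Eiso hL.
(* For non-linear [w] the value of [f w b] is an irrelevant default. *)
pose f w b : canmap_spanType := insubd 0 (canmap w b).
have fE w b : linR w -> val (f w b) = canmap w b.
  by move=> wL; rewrite insubdK // canmap_in_span.
have fLl a w w' b : linR w -> linR w' ->
    f (fun e => a *: w e + w' e) b = a *: f w b + f w' b.
  move=> wL w'L; apply: val_inj; rewrite linearP /= !fE //; last exact: linR_comb.
  exact: canmapPl.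
have fLr a w b b' : linR w -> f w (a *: b + b') = a *: f w b + f w b'.
  by move=> wL; apply: val_inj; rewrite linearP /= !fE // canmapPr.
have [[g [gL gf]] _] := Eiso _ f fLl fLr.
have [_ canmap_unique] := Eiso _ (@canmap R E B)
  (fun a w w' b _ _ => canmapPl w w' a b) (fun a w b b' _ => canmapPr w a b b').
have valgL : linear_on_hom (val \o g).
  by move=> a h1 h2 h1L h2L; rewrite /= gL // linearP.
have <- : val (g h) = h.
  apply: (canmap_unique (val \o g) id valgL) => // w b wL.
  by rewrite /= gf // fE.
exact/asboolP/(valP (g h)).
Qed.

End CanmapSpan.

(* The trivial (square-zero) extension R + E, with (a, x) (b, y) = (ab, ay + bx).
   It is a nonzero ring only when 1 != 0 in R, so the type takes a proof of
   that as a parameter for its ring instance to be canonical. *)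
Definition trivext (R : comPzRingType) (E : lmodType R) (_ : (1 : R) != 0) : Type :=
  (R^o * E)%type.

HB.instance Definition _ R E H := GRing.Lmodule.on (@trivext R E H).

Section TrivialExtension.
Variables (R : comPzRingType) (E : lmodType R) (R_nontrivial : (1 : R) != 0).
Local Notation T := (@trivext R E R_nontrivial).

Definition trivext_mul (u v : T) : T := (u.1 * v.1, u.1 *: v.2 + v.1 *: u.2).

Fact trivext_mulA : associative trivext_mul.
Proof.
move=> [a x] [b y] [c z]; congr pair; rewrite /= ?mulrA //.
by rewrite !scalerDr !scalerA addrA (mulrC c a) (mulrC c b) addrAC.
Qed.

Fact trivext_mulC : commutative trivext_mul.
Proof. by move=> [a x] [b y]; rewrite /trivext_mul mulrC addrC. Qed.

Fact trivext_mul1 : left_id (1, 0) trivext_mul.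
Proof. by move=> [a x]; rewrite /trivext_mul /= mul1r scale1r scaler0 addr0. Qed.

Fact trivext_mulDl : left_distributive trivext_mul +%R.
Proof.
by move=> [a x] [b y] [c z]; rewrite /trivext_mul /= mulrDl scalerDl scalerDr addrACA.
Qed.

Fact trivext_one_neq0 : (1, 0) != 0 :> T.
Proof. by apply/eqP => -[/eqP]; rewrite (negPf R_nontrivial). Qed.

HB.instance Definition _ := GRing.Zmodule_isComNzRing.Build T
  trivext_mulA trivext_mulC trivext_mul1 trivext_mulDl trivext_one_neq0.

Fact trivext_scalerAl a (u v : T) : a *: (u * v) = (a *: u) * v.
Proof.
case: u v => [b x] [c y]; congr pair; first exact: mulrA.
by rewrite /= scalerDr !scalerA (mulrC a c).
Qed.

HB.instance Definition _ := GRing.Lmodule_isLalgebra.Build R T trivext_scalerAl.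
HB.instance Definition _ := GRing.Lalgebra_isComAlgebra.Build R T.

End TrivialExtension.

Section DualBasisFromCanonicalIso.
Variables (R : comPzRingType) (E : lmodType R).

Lemma zero_ring_dual_basis : (1 : R) = 0 -> dual_basis (@nil ((E -> R^o) * E)).
Proof.
move=> R10; split=> [// | e]; rewrite big_nil.
by rewrite -[e]scale1r R10 scale0r.
Qed.

Lemma trivext_dual_basis (R_nontrivial : (1 : R) != 0) :
  canonical_iso E (@trivext R E R_nontrivial) ->
  exists t : seq ((E -> R^o) * E), dual_basis t.
Proof.
move=> Eiso; pose emb (e : E) : @trivext R E R_nontrivial := (0, e).
have embL : linR emb.
  by move=> a x y; rewrite /emb; congr pair; rewrite /= scaler0 addr0.
have [t tL embE] := canonical_iso_in_canmap_span Eiso embL.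
exists [seq (p.1, p.2.2) | p <- t]; split.
  by move=> _ /mapP[p pt ->]; exact: (tL p pt).
move=> e; rewrite -[e in LHS]/((emb e).2) embE fct_sumE big_map.
by rewrite (big_morph snd (fun _ _ => erefl) erefl).
Qed.

End DualBasisFromCanonicalIso.

Theorem mainTheorem4 (R : comPzRingType) (E : lmodType R) :
  (forall B : comAlgType R, canonical_iso E B) <->
  (finite_type E /\ projective E).
Proof.
split=> [Eiso | [Efin Eproj]].
  have [t tB] : exists t : seq ((E -> R^o) * E), dual_basis t.
    have [R10 | R_nontrivial] := eqVneq (1 : R) 0.
      by exists [::]; exact: zero_ring_dual_basis.
    exact: trivext_dual_basis (Eiso _).
  by split; [exact: dual_basis_finite_type tB | exact: dual_basis_projective tB].
have [t tB] := finite_projective_dual_basis Efin Eproj.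
exact: dual_basis_canonical_iso tB.
Qed.
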